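(* Let $n\ge1$ and let $f$ be a function from the set of Schubert problems for $GL_n$ (triples $(u,v,w)\in S_n^3$ with $l(u)+l(v)+l(w)=\binom n2$) to $\mathbb Z$ satisfying: (1) (descent-cycling invariance) for every triple $(u,v,w)\in S_n^3$ with $l(u)+l(v)+l(w)=\binom n2-1$ and every $i\in\{1,\dots,n-1\}$ with $u(i)<u(i+1)$, $v(i)<v(i+1)$, $w(i)<w(i+1)$, one has $f(us_i,v,w)=f(u,vs_i,w)=f(u,v,ws_i)$; (2) $f(u,v,w)=0$ whenever there is $i$ with $u(i)<u(i+1)$, $v(i)<v(i+1)$ and $w(i)<w(i+1)$; (3) $f(\mathrm{id},\mathrm{id},w_0)=1$. Let $\pi,\sigma\in S_n$ with $l(\pi)+l(\sigma)=\binom n2$. Then $f(\pi,\mathrm{id},\sigma)=1$ if $\pi(m)=n+1-\sigma(m)$ for all $m$ (i.e. $\pi=w_0\sigma$), and $f(\pi,\mathrm{id},\sigma)=0$ otherwise.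
   Context: Permutations are in one-line notation; $l$ is the number of inversions; $w_0=n\,n{-}1\cdots1$ is the longest permutation; $\mathrm{id}$ is the identity; $us_i$ denotes $u$ with the entries in positions $i$ and $i+1$ swapped. *)

(* Permutations of {1..n} are 'S_n = {perm 'I_n}
   (positions/values shifted to 0..n-1). *)
From mathcomp Require Import all_boot all_order all_algebra all_fingroup.
Set Implicit Arguments. Unset Strict Implicit. Unset Printing Implicit Defensive.

Definition plength n (u : 'S_n) : nat :=
  #|[set p : 'I_n * 'I_n | (p.1 < p.2) && (u p.2 < u p.1)]|.

(* u s_i : u with the entries in positions i and j (= i+1) swapped,
   i.e. the function x |-> u (tperm i j x). In mathcomp (s * t) x = t (s x). *)
Definition swap_pos n (u : 'S_n) (i j : 'I_n) : 'S_n := (tperm i j * u)%g.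

Definition asc n (u : 'S_n) (i j : 'I_n) : bool := u i < u j.

Definition schubert_problem n (u v w : 'S_n) : Prop :=
  plength u + plength v + plength w = 'C(n, 2).

Definition w0 n : 'S_n := perm (@rev_ord_inj n).

(* Induct on l(pi).  If sigma has an ascent at some i where pi has a descent,
   descent cycling moves s_i from pi to sigma: f(pi, id, sigma) =
   f(pi s_i, id, sigma s_i), which lowers l(pi) and preserves both the Schubert
   condition and the relation pi = w0 sigma.  If pi and sigma share an ascent,
   f vanishes by (2), and pi <> w0 sigma because w0 turns ascents of sigma into
   descents.  Otherwise sigma has no ascent at all, so sigma = w0, l(pi) = 0
   and pi = id, where (3) applies. *)

From mathcomp Require Import all_boot all_order all_algebra all_fingroup.
From mathcomp Require Import zify.
Set Implicit Arguments. Unset Strict Implicit.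

Lemma card_ltn_pairs n : #|[set p : 'I_n * 'I_n | p.1 < p.2]| = 'C(n, 2).
Proof.
rewrite -sum1_card (eq_bigl (fun p : 'I_n * 'I_n => true && (p.1 < p.2))) => [|p];
  last by rewrite inE.
rewrite -(pair_big_dep xpredT (fun a b : 'I_n => a < b) (fun _ _ => 1)) /=.
rewrite (exchange_big_dep xpredT) //= -bin2_sum big_mkord; apply: eq_bigr => b _.
rewrite -(big_ord_widen_cond n xpredT (fun _ => 1) (ltnW (ltn_ord b))).
by rewrite sum1_card card_ord.
Qed.

Lemma ltn_rev_ord n (a b : 'I_n) : (rev_ord a < rev_ord b) = (b < a).
Proof. by rewrite /=; have := ltn_ord a; have := ltn_ord b; lia. Qed.

Lemma perm_ltnNgt n (u : 'S_n) (i j : 'I_n) : i != j -> (u j < u i) = ~~ (u i < u j).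
Proof.
by move=> neq_ij; rewrite ltnNge leq_eqVlt negb_or (inj_eq val_inj) (inj_eq perm_inj) neq_ij.
Qed.

Lemma incr_perm_eq1 n (u : 'S_n) : {homo u : a b / a < b} -> u = 1%g.
Proof.
move=> u_incr.
have ord_sorted : sorted (fun a b : 'I_n => a < b) (enum 'I_n).
  by have := iota_ltn_sorted 0 n; rewrite -val_enum_ord sorted_map.
have : map u (enum 'I_n) = map id (enum 'I_n).
  rewrite map_id; apply: (irr_sorted_eq (leT := fun a b : 'I_n => a < b)) => //.
  - exact: ltn_trans.
  - exact: ltnn.
  - by rewrite sorted_map; apply: sub_sorted ord_sorted.
  - by move=> x; rewrite mem_enum -[x](permKV u) mem_map ?mem_enum //; exact: perm_inj.
by move/eq_in_map => u_id; apply/permP => x; rewrite perm1 u_id ?mem_enum.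
Qed.

Lemma tperm_adj_ltn n (i j a b : 'I_n) : j = i.+1 :> nat ->
  (a, b) != (i, j) -> (a, b) != (j, i) -> (tperm i j a < tperm i j b) = (a < b).
Proof.
move=> hij; rewrite !xpair_eqE.
case: (tpermP i j a) => [->|->|/eqP + /eqP +];
case: (tpermP i j b) => [->|->|/eqP + /eqP +]; rewrite ?eqxx ?ltnn //=.
all: rewrite -!val_eqE /= => *; apply/idP/idP; lia.
Qed.

Lemma swap_posE n (u : 'S_n) i j x : swap_pos u i j x = u (tperm i j x).
Proof. by rewrite permM. Qed.

Lemma swap_posK n (u : 'S_n) i j : swap_pos (swap_pos u i j) i j = u.
Proof. by rewrite /swap_pos mulgA tperm2 mul1g. Qed.

Lemma plength_swap_pos n (u : 'S_n) (i j : 'I_n) : val j = i.+1 -> u i < u j ->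
  plength (swap_pos u i j) = (plength u).+1.
Proof.
move=> hij asc_ij; set s := tperm i j.
pose s2 (p : 'I_n * 'I_n) := (s p.1, s p.2).
have s2_inj : injective s2 by move=> [a b] [c d] [/perm_inj -> /perm_inj ->].
have inv_swap : [set p : 'I_n * 'I_n | (p.1 < p.2) && (swap_pos u i j p.2 < swap_pos u i j p.1)]
    = (i, j) |: s2 @^-1: [set p : 'I_n * 'I_n | (p.1 < p.2) && (u p.2 < u p.1)].
  apply/setP => -[a b]; rewrite !inE /= !swap_posE.
  have [[-> ->]|ne_ij] := eqVneq (a, b) (i, j).
    by rewrite /s tpermL tpermR asc_ij hij ltnSn.
  have [[-> ->]|ne_ji] := eqVneq (a, b) (j, i).
    have u_ji : (u j < u i) = false by rewrite ltnNge ltnW.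
    by rewrite /s tpermL tpermR u_ji !andbF.
  by rewrite /= /s tperm_adj_ltn.
rewrite /plength inv_swap cardsU1 card_preimset // !inE /= /s tpermL tpermR.
by rewrite hij ltnNge leqnSn.
Qed.

Lemma plength1 n : plength (1%g : 'S_n) = 0.
Proof.
apply/eqP; rewrite cards_eq0; apply/eqP/setP => -[a b].
by rewrite !inE /= !perm1; case: ltngtP.
Qed.

Lemma plength_eq0 n (u : 'S_n) : plength u = 0 -> u = 1%g.
Proof.
move/eqP; rewrite cards_eq0 => /eqP no_inv; apply: incr_perm_eq1 => a b lt_ab.
have := in_set0 (a, b); rewrite -no_inv inE /= lt_ab /= => /negbT.
by rewrite perm_ltnNgt ?negbK // neq_ltn lt_ab.
Qed.

Lemma plength_decr n (u : 'S_n) : {homo u : a b / a < b >-> b < a} -> plength u = 'C(n, 2).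
Proof.
move=> u_decr; rewrite /plength -card_ltn_pairs; apply: eq_card => -[a b].
by rewrite !inE /=; apply/andb_idr; apply: u_decr.
Qed.

Lemma adjacent_descents_decr n (u : 'S_n) :
  (forall i j : 'I_n, val j = i.+1 -> u j < u i) -> {homo u : a b / a < b >-> b < a}.
Proof.
case: n u => [|n] u desc a b; first by case: a.
pose g k := val (u (inord k)).
have g_decr : {in [pred k | k < n.+1] &, {homo g : k l / k < l >-> l < k}}.
  apply: homo_ltn_in => [k l m lt_lk lt_ml|k l _ lD m /andP[_ lt_ml]|k _ kn1].
  - exact: ltn_trans lt_ml lt_lk.
  - exact: ltn_trans lt_ml lD.
  - by apply: desc; rewrite /= !inordK // ltnW.
by move=> lt_ab; have := g_decr a b (ltn_ord a) (ltn_ord b) lt_ab; rewrite /g !inord_val.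
Qed.

Lemma w0E n (m : 'I_n) : w0 n m = rev_ord m.
Proof. by rewrite permE. Qed.

Lemma w0K n : (w0 n * w0 n = 1)%g.
Proof. by apply/permP => m; rewrite permM !w0E rev_ordK perm1. Qed.

(* Permutations compose left to right: [(sigma * w0 n) m = w0 n (sigma m)],
   so [sigma * w0 n] is the paper's w0 sigma. *)
Lemma rev_ord_permP n (pi sigma : 'S_n) :
  (forall m, pi m = rev_ord (sigma m)) <-> pi = (sigma * w0 n)%g.
Proof.
split=> [pi_rev | -> m]; last by rewrite permM w0E.
by apply/permP => m; rewrite permM w0E pi_rev.
Qed.

Lemma decr_perm_eq_w0 n (sigma : 'S_n) : {homo sigma : a b / a < b >-> b < a} -> sigma = w0 n.
Proof.
move=> sigma_decr.
have : (sigma * w0 n)%g = 1%g.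
  by apply: incr_perm_eq1 => a b lt_ab; rewrite !permM !w0E ltn_rev_ord sigma_decr.
by move/(congr1 (fun p => p * w0 n)%g); rewrite -mulgA w0K mulg1 mul1g.
Qed.

Section DescentCycling.

Variables (n : nat) (f : 'S_n -> 'S_n -> 'S_n -> int).

Hypothesis descent_cycling : forall (u v w : 'S_n) (i j : 'I_n),
  (plength u + plength v + plength w).+1 = 'C(n, 2) ->
  val j = (val i).+1 ->
  asc u i j -> asc v i j -> asc w i j ->
  f (swap_pos u i j) v w = f u (swap_pos v i j) w /\
  f u (swap_pos v i j) w = f u v (swap_pos w i j).

Hypothesis common_ascent_vanish : forall (u v w : 'S_n) (i j : 'I_n),
  schubert_problem u v w ->
  val j = (val i).+1 ->
  asc u i j -> asc v i j -> asc w i j ->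
  f u v w = 0%R.

Hypothesis f_id_id_w0 : f 1%g 1%g (w0 n) = 1%R.

Lemma f_id_middle_eq (pi sigma : 'S_n) :
  plength pi + plength sigma = 'C(n, 2) -> f pi 1%g sigma = ((pi == (sigma * w0 n)%g)%:R)%R.
Proof.
have [k] := ubnP (plength pi); elim: k pi sigma => // k IH pi sigma lt_pi_k len_sum.
have asc1 (i j : 'I_n) : val j = (val i).+1 -> asc 1%g i j.
  by move=> hij; rewrite /asc !perm1 hij.
have adj_neq (i j : 'I_n) : val j = (val i).+1 -> i != j.
  by move=> hij; apply/eqP => eq_ij; move: hij; rewrite eq_ij => /n_Sn.
have [/existsP[i /existsP[j /andP[/eqP hij asc_sigma]]] | /existsPn no_asc] :=
  boolP [exists i : 'I_n, exists j : 'I_n, (val j == (val i).+1) && (sigma i < sigma j)].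
  case: (ltngtP (pi i) (pi j)) => [asc_pi|desc_pi|/val_inj/perm_inj eq_ij];
    last by move: (adj_neq i j hij); rewrite eq_ij eqxx.
  - have -> : (pi == sigma * w0 n)%g = false.
      apply/eqP => pi_rev; move: asc_pi.
      by rewrite pi_rev !permM !w0E ltn_rev_ord ltnNge (ltnW asc_sigma).
    apply: (common_ascent_vanish _ hij asc_pi (asc1 i j hij) asc_sigma).
    by rewrite /schubert_problem plength1 addn0.
  - set u := swap_pos pi i j.
    have asc_u : u i < u j by rewrite !swap_posE tpermL tpermR desc_pi.
    have len_pi : plength pi = (plength u).+1 by rewrite -(plength_swap_pos hij asc_u) swap_posK.
    have len_sum_u : (plength u + plength (1%g : 'S_n) + plength sigma).+1 = 'C(n, 2).
      by rewrite plength1 addn0 -addSn -len_pi.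
    have [cyc_uv cyc_vw] := descent_cycling len_sum_u hij asc_u (asc1 i j hij) asc_sigma.
    have -> : f pi 1%g sigma = f u 1%g (swap_pos sigma i j) by rewrite -cyc_vw -cyc_uv swap_posK.
    rewrite IH; last by rewrite plength_swap_pos // addnS -addSn -len_pi.
    + by rewrite /u /swap_pos -mulgA (inj_eq (mulgI _)).
    + by move: lt_pi_k; rewrite len_pi ltnS.
have desc_sigma (i j : 'I_n) : val j = (val i).+1 -> sigma j < sigma i.
  move=> hij; move/existsPn/(_ j): (no_asc i).
  by rewrite hij eqxx (perm_ltnNgt _ (adj_neq i j hij)).
have sigma_decr := adjacent_descents_decr desc_sigma.
have pi1 : pi = 1%g.
  by apply/plength_eq0/eqP; rewrite -(eqn_add2r (plength sigma)) len_sum plength_decr.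
by rewrite pi1 (decr_perm_eq_w0 sigma_decr) w0K eqxx.
Qed.

End DescentCycling.

Theorem lemma4 (n : nat) (hn : 0 < n) (f : 'S_n -> 'S_n -> 'S_n -> int)
  (h1 : forall (u v w : 'S_n) (i j : 'I_n),
      (plength u + plength v + plength w).+1 = 'C(n, 2) ->
      val j = (val i).+1 ->
      asc u i j -> asc v i j -> asc w i j ->
      f (swap_pos u i j) v w = f u (swap_pos v i j) w /\
      f u (swap_pos v i j) w = f u v (swap_pos w i j))
  (h2 : forall (u v w : 'S_n) (i j : 'I_n),
      schubert_problem u v w ->
      val j = (val i).+1 ->
      asc u i j -> asc v i j -> asc w i j ->
      f u v w = 0%R)
  (h3 : f 1%g 1%g (w0 n) = 1%R)
  (pi sigma : 'S_n)
  (hps : plength pi + plength sigma = 'C(n, 2)) :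
  ((forall m : 'I_n, pi m = rev_ord (sigma m)) -> f pi 1%g sigma = 1%R) /\
  (~ (forall m : 'I_n, pi m = rev_ord (sigma m)) -> f pi 1%g sigma = 0%R).
Proof.
rewrite (f_id_middle_eq h1 h2 h3 hps).
split=> [/rev_ord_permP -> | not_rev]; first by rewrite eqxx.
by case: eqP => // /rev_ord_permP.
Qed.
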